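(* Let $I$ be an index set, $S,T\in GL(2,\mathbb R)$, and for $r\in I$ let $P_r=S\,\mathrm{diag}\{p_{1r},p_{2r}\}S^{-1}$, $Q_r=T\,\mathrm{diag}\{q_{1r},q_{2r}\}T^{-1}$ with all $p_{kr},q_{kr}$ nonzero real numbers. There exists a homeomorphism $f\colon\overline{\mathbb R}\to\overline{\mathbb R}$ with $f(P_r(x))=Q_r(f(x))$ for all $x\in\overline{\mathbb R}$, $r\in I$, if and only if there exists a real number $\alpha\neq-1$ such that $$\frac{q_{1r}}{q_{2r}}=\frac{p_{1r}}{p_{2r}}\Bigl|\frac{p_{1r}}{p_{2r}}\Bigr|^{\alpha}\quad\text{for all }r\in I.$$
   Context: $\overline{\mathbb R}=\mathbb R\cup\{\infty\}$ is the extended real line (real projective line). A matrix $\begin{pmatrix}a&b\\c&d\end{pmatrix}\in GL(2,\mathbb R)$ acts on $\overline{\mathbb R}$ by $x\mapsto\frac{ax+b}{cx+d}$. *)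

From Stdlib Require Import Reals.
Open Scope R_scope.

Record mat2 := Mat2 { ma : R; mb : R; mc : R; md : R }.

Definition mdet (M : mat2) : R := ma M * md M - mb M * mc M.

Definition mmul (M N : mat2) : mat2 :=
  Mat2 (ma M * ma N + mb M * mc N) (ma M * mb N + mb M * md N)
       (mc M * ma N + md M * mc N) (mc M * mb N + md M * md N).

(** Inverse (meaningful when det <> 0). *)
Definition minv (M : mat2) : mat2 :=
  Mat2 (md M / mdet M) (- mb M / mdet M) (- mc M / mdet M) (ma M / mdet M).

Definition diag2 (x y : R) : mat2 := Mat2 x 0 0 y.

Definition GL2 (M : mat2) : Prop := mdet M <> 0.

(** Extended real line R ∪ {∞}: [None] is ∞. *)
Definition ext := option R.

Definition act (M : mat2) (x : ext) : ext :=
  match x with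
  | Some t => if Req_EM_T (mc M * t + md M) 0 then None
              else Some ((ma M * t + mb M) / (mc M * t + md M))
  | None => if Req_EM_T (mc M) 0 then None else Some (ma M / mc M)
  end.

Definition ext_open (U : ext -> Prop) : Prop :=
  open_set (fun x : R => U (Some x)) /\
  (U None -> exists M : R, forall x : R, M < Rabs x -> U (Some x)).

Definition ext_continuous (f : ext -> ext) : Prop :=
  forall U, ext_open U -> ext_open (fun x => U (f x)).

Definition ext_homeomorphism (f : ext -> ext) : Prop :=
  exists g : ext -> ext,
    (forall x, g (f x) = x) /\ (forall y, f (g y) = y) /\
    ext_continuous f /\ ext_continuous g.

From Stdlib Require Import Reals Lra Classical FunctionalExtensionality ZArith.
Open Scope R_scope.

(** Conjugating by [S] and [T] turns the problem into one about a homeomorphism [h] of the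
    projective line with [h (l_r x) = m_r h(x)], where [l_r = p1r/p2r] and [m_r = q1r/q2r].
    If [alpha] exists, the signed power [t |-> sgn(t) |t|^(1+alpha)] (followed by [t |-> 1/t]
    when [1 + alpha < 0]) is such an [h].
    Conversely, unless every [l_r] is [1], [h] permutes [{0, oo}], the fixed points of the
    dilations, so it restricts to a homeomorphism of [R \ {0}]. Preserving or swapping the two
    half-lines forces [m_r] to have the sign of [l_r], and in logarithmic coordinates
    [K(x) = ln |h(e^x)|] is a monotone map conjugating the translation by [2 ln |l_r|] to the
    translation by [2 ln |m_r|]. A monotone map commuting with a translation is at bounded distance
    from a linear map, so all displacement ratios agree: [ln |m_r| = c ln |l_r|] with [c <> 0],
    that is [m_r = l_r |l_r|^(c-1)]. *)

(** * The Moebius action in homogeneous coordinates *)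

Definition homog (x : ext) : R * R :=
  match x with Some t => (t, 1) | None => (1, 0) end.

(* [(0, 0)] is sent to the junk value [None]. *)
Definition dehomog (w : R * R) : ext :=
  if Req_EM_T (snd w) 0 then None else Some (fst w / snd w).

Definition mapply (M : mat2) (w : R * R) : R * R :=
  (ma M * fst w + mb M * snd w, mc M * fst w + md M * snd w).

Definition rescale (k : R) (w : R * R) : R * R := (k * fst w, k * snd w).

Lemma act_dehomog M x : act M x = dehomog (mapply M (homog x)).
Proof.
  destruct M as [a b c d], x as [t|]; unfold dehomog; simpl;
    rewrite ?Rmult_1_r, ?Rmult_0_r, ?Rplus_0_r; reflexivity.
Qed.

Lemma dehomog_rescale k w : k <> 0 -> dehomog (rescale k w) = dehomog w.
Proof.
  intros Hk. destruct w as [u v]; unfold dehomog, rescale; simpl.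
  destruct (Req_EM_T (k * v) 0) as [E|E], (Req_EM_T v 0) as [F|F]; auto.
  - destruct (Rmult_integral _ _ E); contradiction.
  - subst v. rewrite Rmult_0_r in E. contradiction.
  - f_equal. field. auto.
Qed.

Lemma homog_dehomog w : w <> (0, 0) -> exists k, k <> 0 /\ homog (dehomog w) = rescale k w.
Proof.
  destruct w as [u v]; unfold dehomog, rescale; simpl. intros Hw.
  destruct (Req_EM_T v 0) as [->|Hv].
  - assert (Hu : u <> 0) by (intros ->; auto).
    exists (/ u). split; [apply Rinv_neq_0_compat; auto|]. simpl.
    f_equal; field; auto.
  - exists (/ v). split; [apply Rinv_neq_0_compat; auto|]. simpl.
    f_equal; field; auto.
Qed.

Lemma mapply_rescale M k w : mapply M (rescale k w) = rescale k (mapply M w).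
Proof. unfold mapply, rescale; simpl; f_equal; ring. Qed.

Lemma mapply_mmul M N w : mapply (mmul M N) w = mapply M (mapply N w).
Proof. destruct M, N; unfold mapply; simpl; f_equal; ring. Qed.

Lemma mapply_neq0 M w : mdet M <> 0 -> w <> (0, 0) -> mapply M w <> (0, 0).
Proof.
  destruct M as [a b c d], w as [u v]; unfold mdet, mapply; simpl.
  intros HM Hw E. injection E as E1 E2. apply Hw.
  assert (Hu : (a * d - b * c) * u = 0)
    by (transitivity (d * (a * u + b * v) - b * (c * u + d * v)); [ring|rewrite E1, E2; ring]).
  assert (Hv : (a * d - b * c) * v = 0)
    by (transitivity (a * (c * u + d * v) - c * (a * u + b * v)); [ring|rewrite E1, E2; ring]).
  f_equal; [destruct (Rmult_integral _ _ Hu)|destruct (Rmult_integral _ _ Hv)]; tauto.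
Qed.

Lemma homog_neq0 x : homog x <> (0, 0).
Proof. destruct x; simpl; intro E; injection E; lra. Qed.

Lemma act_mmul M N x : mdet N <> 0 -> act (mmul M N) x = act M (act N x).
Proof.
  intros HN. rewrite !act_dehomog, mapply_mmul.
  destruct (homog_dehomog (mapply N (homog x))) as [k [Hk ->]].
  - apply mapply_neq0, homog_neq0; auto.
  - rewrite mapply_rescale, dehomog_rescale; auto.
Qed.

Lemma mdet_mmul M N : mdet (mmul M N) = mdet M * mdet N.
Proof. destruct M, N; unfold mdet, mmul; simpl; ring. Qed.

Definition mat2_id : mat2 := Mat2 1 0 0 1.

Lemma act_mat2_id x : act mat2_id x = x.
Proof.
  rewrite act_dehomog. destruct x as [t|]; unfold dehomog, mapply; simpl.
  - destruct (Req_EM_T (0 * t + 1 * 1) 0); [lra|]. f_equal. field.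
  - destruct (Req_EM_T (0 * 1 + 1 * 0) 0); [reflexivity|lra].
Qed.

Lemma mdet_minv M : mdet M <> 0 -> mdet (minv M) = / mdet M.
Proof. destruct M; unfold minv, mdet; simpl; intros; field; auto. Qed.

Lemma minv_det_neq0 M : mdet M <> 0 -> mdet (minv M) <> 0.
Proof. intros H. rewrite mdet_minv by auto. apply Rinv_neq_0_compat; auto. Qed.

Lemma mmul_minv_l M : mdet M <> 0 -> mmul (minv M) M = mat2_id.
Proof. destruct M; unfold minv, mmul, mat2_id, mdet; simpl; intros; f_equal; field; auto. Qed.

Lemma mmul_minv_r M : mdet M <> 0 -> mmul M (minv M) = mat2_id.
Proof. destruct M; unfold minv, mmul, mat2_id, mdet; simpl; intros; f_equal; field; auto. Qed.

Lemma act_minvK M x : mdet M <> 0 -> act (minv M) (act M x) = x.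
Proof. intros H. rewrite <- act_mmul, mmul_minv_l by auto. apply act_mat2_id. Qed.

Lemma act_minvKV M x : mdet M <> 0 -> act M (act (minv M) x) = x.
Proof.
  intros H. rewrite <- act_mmul, mmul_minv_r by (auto using minv_det_neq0). apply act_mat2_id.
Qed.

Definition scale (l : R) : ext -> ext := option_map (Rmult l).

Lemma scale_1 x : scale 1 x = x.
Proof. destruct x; simpl; auto. rewrite Rmult_1_l. reflexivity. Qed.

Lemma act_diag2 p1 p2 x : p2 <> 0 -> act (diag2 p1 p2) x = scale (p1 / p2) x.
Proof.
  intros H. destruct x as [t|]; simpl.
  - destruct (Req_EM_T (0 * t + p2) 0); [lra|]. f_equal. field. auto.
  - destruct (Req_EM_T 0 0); [reflexivity|lra].
Qed.

Lemma act_conj_diag2 S p1 p2 x : mdet S <> 0 -> p1 <> 0 -> p2 <> 0 ->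
  act (mmul (mmul S (diag2 p1 p2)) (minv S)) x = act S (scale (p1 / p2) (act (minv S) x)).
Proof.
  intros HS H1 H2.
  assert (HD : mdet (diag2 p1 p2) <> 0)
    by (unfold mdet, diag2; simpl; rewrite Rmult_0_r, Rminus_0_r;
        apply Rmult_integral_contrapositive; auto).
  rewrite act_mmul, act_mmul, act_diag2 by (auto using minv_det_neq0). reflexivity.
Qed.

Definition recip_mx : mat2 := Mat2 0 1 1 0.

Lemma recip_mx_det : mdet recip_mx <> 0.
Proof. unfold mdet, recip_mx; simpl; lra. Qed.

Lemma act_recip_Some t : t <> 0 -> act recip_mx (Some t) = Some (/ t).
Proof. intros Ht. simpl. destruct (Req_EM_T (1 * t + 0) 0); [lra|]. f_equal. field. auto. Qed.

Lemma act_recip_0 : act recip_mx (Some 0) = None.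
Proof. simpl. destruct (Req_EM_T (1 * 0 + 0) 0); [reflexivity|lra]. Qed.

Lemma act_recip_None : act recip_mx None = Some 0.
Proof. simpl. destruct (Req_EM_T 1 0); [lra|]. f_equal. field. Qed.

Lemma act_recip_scale m x : m <> 0 -> act recip_mx (scale m x) = scale (/ m) (act recip_mx x).
Proof.
  intros Hm. destruct x as [t|]; cbn [scale option_map].
  - destruct (Req_dec t 0) as [->|Ht]; [rewrite Rmult_0_r, act_recip_0; reflexivity|].
    rewrite !act_recip_Some by (auto; apply Rmult_integral_contrapositive; auto).
    simpl. f_equal. field. auto.
  - rewrite act_recip_None. simpl. rewrite Rmult_0_r. reflexivity.
Qed.
(** * Topology of the projective line *)

Definition ext_ball (y : ext) (e : R) (z : ext) : Prop :=
  match y, z with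
  | Some u, Some v => Rabs (v - u) < e
  | Some _, None => False
  | None, Some v => / e < Rabs v
  | None, None => True
  end.

Definition ext_continuous_at (f : ext -> ext) (x : ext) : Prop :=
  forall e, 0 < e -> exists d, 0 < d /\ forall z, ext_ball x d z -> ext_ball (f x) e (f z).

Lemma ext_ball_center y e : 0 < e -> ext_ball y e y.
Proof. destruct y; simpl; auto. rewrite Rminus_diag, Rabs_R0. auto. Qed.

Lemma ext_ball_open y e : 0 < e -> ext_open (ext_ball y e).
Proof.
  intros He. destruct y as [u|]; split; simpl; try tauto.
  - intros t Ht. exists (mkposreal _ (proj2 (Rlt_0_minus _ _) Ht)). intros s Hs.
    unfold disc in Hs; simpl in Hs.
    pose proof (Rabs_triang (s - t) (t - u)). replace (s - t + (t - u)) with (s - u) in H by ring.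
    lra.
  - intros t Ht. exists (mkposreal _ (proj2 (Rlt_0_minus _ _) Ht)). intros s Hs.
    unfold disc in Hs; simpl in Hs.
    pose proof (Rabs_triang (s - t) (- s)) as H. replace (s - t + - s) with (- t) in H by ring.
    rewrite !Rabs_Ropp in H. lra.
  - intros _. exists (/ e). auto.
Qed.

Lemma ext_open_ball U y : ext_open U -> U y -> exists e, 0 < e /\ forall z, ext_ball y e z -> U z.
Proof.
  intros [HR HN] Hy. destruct y as [u|].
  - destruct (HR u Hy) as [[e He] HU]. exists e. split; auto.
    intros [v|] Hv; [apply HU; exact Hv|contradiction].
  - destruct (HN Hy) as [B HB]. exists (/ (Rabs B + 1)).
    pose proof (Rabs_pos B). split; [apply Rinv_0_lt_compat; lra|].
    intros [v|] Hv; simpl in Hv; auto. rewrite Rinv_inv in Hv.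
    apply HB. pose proof (Rle_abs B). lra.
Qed.

Lemma ext_continuousP f : ext_continuous f <-> forall x, ext_continuous_at f x.
Proof.
  split.
  - intros Hf x e He.
    destruct (ext_open_ball _ x (Hf _ (ext_ball_open (f x) e He))) as [d [Hd H]];
      [apply ext_ball_center; auto|].
    exists d. auto.
  - intros Hf U HU. split.
    + intros t Ht. destruct (ext_open_ball U _ HU Ht) as [e [He HUe]].
      destruct (Hf (Some t) e He) as [d [Hd H]].
      exists (mkposreal d Hd). intros s Hs. apply HUe, H. exact Hs.
    + intros HN. destruct (ext_open_ball U _ HU HN) as [e [He HUe]].
      destruct (Hf None e He) as [d [Hd H]].
      exists (/ d). intros s Hs. apply HUe, H. exact Hs.
Qed.

Lemma ext_continuous_at_Some f g t :
  (exists d0, 0 < d0 /\ forall s, Rabs (s - t) < d0 -> f (Some s) = Some (g s)) ->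
  continuity_pt g t -> ext_continuous_at f (Some t).
Proof.
  intros [d0 [Hd0 Hfg]] Hg e He. destruct (Hg e He) as [d [Hd H]].
  exists (Rmin d0 d). split; [apply Rmin_glb_lt; auto|].
  assert (Hfg' : forall s, Rabs (s - t) < Rmin d0 d -> f (Some s) = Some (g s))
    by (intros s Hs; apply Hfg; pose proof (Rmin_l d0 d); lra).
  intros [s|] Hs; simpl in Hs; [|contradiction].
  rewrite (Hfg' t), (Hfg' s) by (rewrite ?Rminus_diag, ?Rabs_R0; auto; apply Rmin_glb_lt; auto).
  simpl. destruct (Req_dec s t) as [->|Hst].
  - rewrite Rminus_diag, Rabs_R0. auto.
  - apply H. split; [split; [exact I|auto]|]. simpl. pose proof (Rmin_r d0 d). unfold R_dist. lra.
Qed.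

Lemma ext_continuous_comp f g :
  ext_continuous f -> ext_continuous g -> ext_continuous (fun x => f (g x)).
Proof. intros Hf Hg U HU. apply (Hg (fun y => U (f y))), Hf, HU. Qed.

Lemma ext_homeomorphism_comp f g :
  ext_homeomorphism f -> ext_homeomorphism g -> ext_homeomorphism (fun x => f (g x)).
Proof.
  intros [fi [Hf1 [Hf2 [Hf Hfi]]]] [gi [Hg1 [Hg2 [Hg Hgi]]]].
  exists (fun y => gi (fi y)). split; [|split; [|split]].
  - intros x. rewrite Hf1. auto.
  - intros y. rewrite Hg2. auto.
  - apply ext_continuous_comp; auto.
  - apply ext_continuous_comp; auto.
Qed.

Lemma inv_lt_Rabs_div u d e : 0 < e -> d <> 0 -> Rabs d / e < Rabs u -> / e < Rabs (u / d).
Proof.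
  intros He Hd H. pose proof (Rabs_pos_lt _ Hd) as Pd.
  unfold Rdiv in *. rewrite Rabs_mult, Rabs_inv.
  apply (Rmult_lt_reg_r (Rabs d)); auto. rewrite Rmult_assoc, Rinv_l by lra. lra.
Qed.

Lemma act_affine_continuous a b d : a <> 0 -> d <> 0 -> ext_continuous (act (Mat2 a b 0 d)).
Proof.
  intros Ha Hd. apply ext_continuousP. intros [t|].
  - apply ext_continuous_at_Some with (g := fun s => (a * s + b) / (0 * s + d)).
    + exists 1. split; [lra|]. intros s _. simpl. destruct (Req_EM_T (0 * s + d) 0); [lra|auto].
    + reg. lra.
  - intros e He. pose proof (Rabs_pos_lt _ Ha). pose proof (Rabs_pos d). pose proof (Rabs_pos b).
    assert (Hde : 0 <= Rabs d / e)
      by (apply Rmult_le_pos; [lra|left; apply Rinv_0_lt_compat; auto]).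
    set (B := (Rabs d / e + Rabs b + 1) / Rabs a).
    assert (HB : 0 < B) by (apply Rdiv_lt_0_compat; lra).
    exists (/ B). split; [apply Rinv_0_lt_compat; auto|].
    assert (HN : act (Mat2 a b 0 d) None = None) by (simpl; destruct (Req_EM_T 0 0); [auto|lra]).
    rewrite HN. intros [v|] Hv; [|rewrite HN; exact I]. simpl in Hv |- *. rewrite Rinv_inv in Hv.
    destruct (Req_EM_T (0 * v + d) 0); [lra|simpl].
    apply inv_lt_Rabs_div; [auto|auto|].
    pose proof (Rabs_triang (a * v + b) (- b)) as T.
    replace (a * v + b + - b) with (a * v) in T by ring. rewrite Rabs_mult, Rabs_Ropp in T.
    assert (HaB : Rabs a * B < Rabs a * Rabs v) by (apply Rmult_lt_compat_l; auto).
    replace (Rabs a * B) with (Rabs d / e + Rabs b + 1) in HaB by (unfold B; field; lra).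
    replace (0 * v + d) with d by ring. lra.
Qed.

Lemma act_recip_continuous : ext_continuous (act recip_mx).
Proof.
  apply ext_continuousP. intros [t|].
  - destruct (Req_dec t 0) as [->|Ht].
    + intros e He. exists e. split; auto. rewrite act_recip_0.
      intros [v|] Hv; simpl in Hv; [|contradiction].
      destruct (Req_dec v 0) as [->|Hv0]; [rewrite act_recip_0; exact I|].
      rewrite act_recip_Some by auto. simpl. rewrite Rminus_0_r in Hv. rewrite Rabs_inv.
      apply Rinv_lt_contravar; auto. apply Rmult_lt_0_compat; auto. apply Rabs_pos_lt; auto.
    + apply ext_continuous_at_Some with (g := Rinv).
      * exists (Rabs t). split; [apply Rabs_pos_lt; auto|].
        intros s Hs. apply act_recip_Some. intros ->.
        rewrite Rminus_0_l, Rabs_Ropp in Hs. lra.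
      * apply (continuity_pt_inv id); [apply derivable_continuous_pt, derivable_pt_id|auto].
  - intros e He. exists e. split; auto. rewrite act_recip_None.
    intros [v|] Hv; simpl in Hv;
      [|rewrite act_recip_None; simpl; rewrite Rminus_diag, Rabs_R0; auto].
    assert (Hv0 : v <> 0)
      by (intros ->; rewrite Rabs_R0 in Hv; pose proof (Rinv_0_lt_compat e He); lra).
    rewrite act_recip_Some by auto. simpl. rewrite Rminus_0_r, Rabs_inv.
    rewrite <- (Rinv_inv e). apply Rinv_lt_contravar; auto.
    apply Rmult_lt_0_compat; [apply Rinv_0_lt_compat; auto|apply Rabs_pos_lt; auto].
Qed.

Lemma act_continuous M : mdet M <> 0 -> ext_continuous (act M).
Proof.
  destruct M as [a b c d]. unfold mdet; simpl. intros HM.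
  destruct (Req_dec c 0) as [->|Hc].
  - apply act_affine_continuous; intros ->; apply HM; ring.
  - set (A := Mat2 (- (a * d - b * c) / c) (a / c) 0 1). set (B := Mat2 c d 0 1).
    assert (HA : - (a * d - b * c) / c <> 0)
      by (apply Rmult_integral_contrapositive; split; [lra|apply Rinv_neq_0_compat; auto]).
    assert (HB : mdet B <> 0) by (unfold B, mdet; simpl; lra).
    (* [(at + b)/(ct + d) = a/c - det/(c (ct + d))]: affine, then [x |-> 1/x], then affine. *)
    assert (E : Mat2 a b c d = mmul A (mmul recip_mx B))
      by (unfold A, B, recip_mx, mmul; simpl; f_equal; field; auto).
    replace (act (Mat2 a b c d)) with (fun x => act A (act recip_mx (act B x))).
    + apply ext_continuous_comp; [apply act_affine_continuous; [auto|lra]|].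
      apply ext_continuous_comp; [apply act_recip_continuous|apply act_affine_continuous; lra].
    + apply functional_extensionality. intros x.
      rewrite E, act_mmul, act_mmul; auto. rewrite mdet_mmul. apply Rmult_integral_contrapositive.
      split; [apply recip_mx_det|auto].
Qed.

Lemma act_homeomorphism M : mdet M <> 0 -> ext_homeomorphism (act M).
Proof.
  intros H. exists (act (minv M)). split; [|split; [|split]].
  - intros x. apply act_minvK; auto.
  - intros y. apply act_minvKV; auto.
  - apply act_continuous; auto.
  - apply act_continuous, minv_det_neq0; auto.
Qed.

(** * Signed powers *)

Lemma Rpower_gt_0 x y : 0 < Rpower x y.
Proof. apply exp_pos. Qed.

Lemma Rpower_root x c : 0 < x -> c <> 0 -> Rpower (Rpower x (/ c)) c = x.
Proof. intros Hx Hc. rewrite Rpower_mult, Rinv_l, Rpower_1; auto. Qed.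

Lemma continuity_pt_Rpower x y : 0 < x -> continuity_pt (fun t => Rpower t y) x.
Proof.
  intros Hx. apply derivable_continuous_pt. exact (exist _ _ (derivable_pt_lim_power x y Hx)).
Qed.

(** [spow c t = sgn(t) |t|^c], written so that [c = alpha + 1] gives the theorem's [l |l|^alpha]. *)
Definition spow (c t : R) : R := t * Rpower (Rabs t) (c - 1).

Lemma spow_0 c : spow c 0 = 0.
Proof. unfold spow. ring. Qed.

Lemma spow_mult c x y : spow c (x * y) = spow c x * spow c y.
Proof.
  destruct (Req_dec x 0) as [->|Hx]; [rewrite Rmult_0_l, spow_0; ring|].
  destruct (Req_dec y 0) as [->|Hy]; [rewrite Rmult_0_r, spow_0; ring|].
  unfold spow. rewrite Rabs_mult, <- Rpower_mult_distr by (apply Rabs_pos_lt; auto). ring.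
Qed.

Lemma Rabs_spow c x : x <> 0 -> Rabs (spow c x) = Rpower (Rabs x) c.
Proof.
  intros Hx. pose proof (Rabs_pos_lt _ Hx).
  unfold spow. rewrite Rabs_mult, (Rabs_pos_eq (Rpower _ _)) by (left; apply Rpower_gt_0).
  rewrite <- (Rpower_1 (Rabs x)) at 1 by auto. rewrite <- Rpower_plus. f_equal. ring.
Qed.

Lemma spow_neq0 c x : x <> 0 -> spow c x <> 0.
Proof.
  intros Hx. apply Rmult_integral_contrapositive. split; auto. apply Rgt_not_eq, Rpower_gt_0.
Qed.

Lemma spowK c x : c <> 0 -> spow (/ c) (spow c x) = x.
Proof.
  intros Hc. destruct (Req_dec x 0) as [->|Hx]; [rewrite !spow_0; auto|].
  unfold spow at 1. rewrite Rabs_spow, Rpower_mult by auto.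
  unfold spow. rewrite Rmult_assoc, <- Rpower_plus.
  replace (c - 1 + c * (/ c - 1)) with 0 by (field; auto).
  rewrite Rpower_O by (apply Rabs_pos_lt; auto). ring.
Qed.

Lemma spow_opp c x : x <> 0 -> spow (- c) x = / spow c x.
Proof.
  intros Hx. pose proof (Rabs_pos_lt _ Hx) as Px.
  unfold spow. replace (- c - 1) with (- (c - 1) + - INR 2) by (simpl; ring).
  rewrite Rpower_plus, !Rpower_Ropp, Rpower_pow by auto.
  replace (Rabs x ^ 2) with (x * x) by (simpl; rewrite Rmult_1_r, <- Rabs_mult, Rabs_pos_eq; nra).
  pose proof (Rpower_gt_0 (Rabs x) (c - 1)).
  field. split; [lra|auto].
Qed.

Lemma continuity_pt_spow c x : x <> 0 -> continuity_pt (spow c) x.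
Proof.
  intros Hx. apply (continuity_pt_mult id (fun t => Rpower (Rabs t) (c - 1))).
  - apply derivable_continuous_pt, derivable_pt_id.
  - apply (continuity_pt_comp Rabs (fun t => Rpower t (c - 1))).
    + apply Rcontinuity_abs.
    + apply continuity_pt_Rpower, Rabs_pos_lt; auto.
Qed.

Definition ext_spow (c : R) : ext -> ext := option_map (spow c).

Lemma ext_spow_scale c l x : ext_spow c (scale l x) = scale (spow c l) (ext_spow c x).
Proof. destruct x; simpl; auto. rewrite spow_mult. reflexivity. Qed.

Lemma ext_spowK c x : c <> 0 -> ext_spow (/ c) (ext_spow c x) = x.
Proof. intros Hc. destruct x; simpl; auto. rewrite spowK; auto. Qed.

Lemma ext_spow_continuous c : 0 < c -> ext_continuous (ext_spow c).
Proof.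
  intros Hc. apply ext_continuousP. intros [t|].
  - destruct (Req_dec t 0) as [->|Ht].
    + intros e He. exists (Rpower e (/ c)). split; [apply Rpower_gt_0|].
      intros [v|] Hv; simpl in *; [|contradiction].
      rewrite spow_0, Rminus_0_r in *.
      destruct (Req_dec v 0) as [->|Hv0]; [rewrite spow_0, Rabs_R0; auto|].
      rewrite Rabs_spow, <- (Rpower_root e c) by (auto; lra).
      apply Rlt_Rpower_l; auto. split; auto. apply Rabs_pos_lt; auto.
    + apply ext_continuous_at_Some with (g := spow c); [|apply continuity_pt_spow; auto].
      exists 1. split; [lra|auto].
  - intros e He. assert (Hr : 0 < Rpower (/ e) (/ c)) by apply Rpower_gt_0.
    exists (/ Rpower (/ e) (/ c)). split; [apply Rinv_0_lt_compat; auto|].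
    intros [v|] Hv; simpl in *; auto. rewrite Rinv_inv in Hv.
    assert (Hv0 : v <> 0) by (intros ->; rewrite Rabs_R0 in Hv; lra).
    rewrite Rabs_spow, <- (Rpower_root (/ e) c) by (auto; try apply Rinv_0_lt_compat; lra).
    apply Rlt_Rpower_l; auto.
Qed.

Lemma ext_spow_homeomorphism c : 0 < c -> ext_homeomorphism (ext_spow c).
Proof.
  intros Hc. pose proof (Rinv_0_lt_compat _ Hc) as Hc'.
  exists (ext_spow (/ c)). split; [|split; [|split]].
  - intros x. apply ext_spowK. lra.
  - intros y. rewrite <- (Rinv_inv c) at 1. apply ext_spowK. lra.
  - apply ext_spow_continuous; auto.
  - apply ext_spow_continuous; auto.
Qed.

(** For [c < 0], [spow c] exchanges [0] and [oo]; this is realised by composing [spow (-c)]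
    with [x |-> 1/x]. *)
Definition ext_power (c : R) : ext -> ext :=
  if Rlt_dec 0 c then ext_spow c else fun x => act recip_mx (ext_spow (- c) x).

Lemma ext_power_homeomorphism c : c <> 0 -> ext_homeomorphism (ext_power c).
Proof.
  intros Hc. unfold ext_power. destruct (Rlt_dec 0 c).
  - apply ext_spow_homeomorphism; auto.
  - apply ext_homeomorphism_comp; [apply act_homeomorphism, recip_mx_det|].
    apply ext_spow_homeomorphism; lra.
Qed.

Lemma ext_power_scale c l x : l <> 0 ->
  ext_power c (scale l x) = scale (spow c l) (ext_power c x).
Proof.
  intros Hl. unfold ext_power. destruct (Rlt_dec 0 c).
  - apply ext_spow_scale.
  - rewrite ext_spow_scale, act_recip_scale by (apply spow_neq0; auto).
    rewrite spow_opp, Rinv_inv by auto. reflexivity.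
Qed.

(** * Monotone maps conjugating translations *)

Lemma continuous_nonvanishing_sign f x y : continuity f -> x <= y ->
  (forall z, x <= z <= y -> f z <> 0) -> 0 < f x * f y.
Proof.
  intros Hf Hxy Hnz. apply Rnot_le_lt. intros H.
  destruct (IVT_cor f x y Hf Hxy H) as [z [Hz Hfz]]. exact (Hnz z Hz Hfz).
Qed.

Definition strictly_increasing (K : R -> R) : Prop := forall x y, x < y -> K x < K y.

Lemma continuous_injective_monotone K : continuity K -> (forall x y, K x = K y -> x = y) ->
  strictly_increasing K \/ strictly_increasing (fun x => - K x).
Proof.
  intros HK Hinj.
  (* Slide the pair (x1, y1) to (x2, y2) keeping the first point below the second. *)
  assert (Hsign : forall x1 y1 x2 y2, x1 < y1 -> x2 < y2 -> 0 < (K y1 - K x1) * (K y2 - K x2)).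
  { intros x1 y1 x2 y2 H1 H2.
    set (G := fun s => K ((1 - s) * y1 + s * y2) - K ((1 - s) * x1 + s * x2)).
    assert (HG : continuity G).
    { intros s. apply (continuity_pt_minus (fun s => K ((1 - s) * y1 + s * y2))
                                           (fun s => K ((1 - s) * x1 + s * x2)));
      apply (continuity_pt_comp (fun s => (1 - s) * _ + s * _) K); [reg|apply HK|reg|apply HK]. }
    pose proof (continuous_nonvanishing_sign G 0 1 HG ltac:(lra)) as HGs. unfold G in HGs.
    replace ((1 - 0) * y1 + 0 * y2) with y1 in HGs by ring.
    replace ((1 - 0) * x1 + 0 * x2) with x1 in HGs by ring.
    replace ((1 - 1) * y1 + 1 * y2) with y2 in HGs by ring.
    replace ((1 - 1) * x1 + 1 * x2) with x2 in HGs by ring.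
    apply HGs. intros s Hs E. apply Rminus_diag_uniq, Hinj in E.
    assert (0 <= s * (y2 - x2)) by (apply Rmult_le_pos; lra).
    destruct (Rlt_le_dec s 1); [|nra].
    assert (0 < (1 - s) * (y1 - x1)) by (apply Rmult_lt_0_compat; lra). lra. }
  destruct (Rlt_le_dec (K 0) (K 1)) as [H|H]; [left|right]; intros x y Hxy.
  - pose proof (Hsign x y 0 1 Hxy ltac:(lra)). nra.
  - assert (K 1 <> K 0) by (intro E; apply Hinj in E; lra).
    pose proof (Hsign x y 0 1 Hxy ltac:(lra)). nra.
Qed.

Lemma translation_iter K a b : (forall x, K (x + a) = K x + b) ->
  forall (z : Z) x, K (x + IZR z * a) = K x + IZR z * b.
Proof.
  intros H z. induction z as [|z IH|z IH] using Z.peano_ind; intros x.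
  - rewrite !Rmult_0_l, !Rplus_0_r. reflexivity.
  - rewrite succ_IZR. replace (x + (IZR z + 1) * a) with (x + IZR z * a + a) by ring.
    rewrite H, IH. ring.
  - rewrite <- Z.sub_1_r, minus_IZR. pose proof (H (x + (IZR z - 1) * a)) as E.
    replace (x + (IZR z - 1) * a + a) with (x + IZR z * a) in E by ring.
    rewrite IH in E. lra.
Qed.

Lemma increasing_translation_bound K a b : strictly_increasing K -> 0 < a ->
  (forall x, K (x + a) = K x + b) -> forall x, Rabs (K x - K 0 - b / a * x) <= b.
Proof.
  intros HK Ha H x.
  assert (Hle : forall x y, x <= y -> K x <= K y)
    by (intros u v Huv; destruct (Rle_lt_or_eq _ _ Huv) as [L| ->]; [left; auto|right; auto]).
  assert (Hb : 0 < b) by (pose proof (HK 0 (0 + a) ltac:(lra)); rewrite H in *; lra).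
  set (k := (up (x / a) - 1)%Z).
  destruct (archimed (x / a)) as [Hup1 Hup2].
  assert (Hk : IZR k = IZR (up (x / a)) - 1) by (unfold k; rewrite minus_IZR; reflexivity).
  assert (Hq : IZR k <= x / a <= IZR k + 1) by lra.
  assert (Hx : IZR k * a <= x <= (IZR k + 1) * a).
  { replace x with (x / a * a) by (field; lra). split; apply Rmult_le_compat_r; lra. }
  pose proof (Hle _ _ (proj1 Hx)) as L. pose proof (Hle _ _ (proj2 Hx)) as U.
  rewrite <- (Rplus_0_l (IZR k * a)), (translation_iter K a b) in L by auto.
  rewrite <- succ_IZR, <- (Rplus_0_l (IZR (Z.succ k) * a)), (translation_iter K a b), succ_IZR
    in U by auto.
  replace (b / a * x) with (b * (x / a)) by (field; lra).
  apply Rabs_le. nra.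
Qed.

Lemma monotone_translation_bound K a b :
  strictly_increasing K \/ strictly_increasing (fun x => - K x) -> a <> 0 ->
  (forall x, K (x + a) = K x + b) -> forall x, Rabs (K x - K 0 - b / a * x) <= Rabs b.
Proof.
  assert (Hinc : forall K b, strictly_increasing K -> (forall x, K (x + a) = K x + b) ->
            a <> 0 -> forall x, Rabs (K x - K 0 - b / a * x) <= Rabs b).
  { intros K' b' HK H Ha x. destruct (Rdichotomy _ _ Ha) as [Hn|Hp].
    - assert (H' : forall x, K' (x + - a) = K' x + - b')
        by (intros u; pose proof (H (u + - a)); replace (u + - a + a) with u in * by ring; lra).
      replace (b' / a) with (- b' / - a) by (field; auto). rewrite <- Rabs_Ropp with b'.
      eapply Rle_trans; [apply (increasing_translation_bound K' (- a) (- b')); auto; lra|].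
      apply Rle_abs.
    - eapply Rle_trans; [apply (increasing_translation_bound K' a b'); auto|apply Rle_abs]. }
  intros [HK|HK] Ha H x; [apply Hinc; auto|].
  replace (K x - K 0 - b / a * x) with (- (- K x - - K 0 - - b / a * x)) by (field; auto).
  rewrite Rabs_Ropp, <- (Rabs_Ropp b).
  apply (Hinc (fun x => - K x)); auto. intros u. rewrite H. ring.
Qed.

Lemma nat_multiples_bounded c B : (forall n : nat, Rabs (INR n * c) <= B) -> c = 0.
Proof.
  intros H. apply NNPP. intros Hc. pose proof (Rabs_pos_lt _ Hc) as Pc.
  assert (HB : 0 <= B) by (pose proof (H 0%nat); simpl in *; rewrite Rmult_0_l, Rabs_R0 in *; lra).
  destruct (archimed_cor1 (Rabs c / (B + 1))) as [N [HN HN0]]; [apply Rdiv_lt_0_compat; lra|].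
  pose proof (H N) as HcN. rewrite Rabs_mult, Rabs_pos_eq in HcN by apply pos_INR.
  apply lt_0_INR in HN0.
  apply (Rmult_lt_compat_r (INR N * (B + 1))) in HN; [|nra].
  replace (/ INR N * (INR N * (B + 1))) with (B + 1) in HN by (field; lra).
  replace (Rabs c / (B + 1) * (INR N * (B + 1))) with (INR N * Rabs c) in HN by (field; lra).
  lra.
Qed.

Lemma monotone_translation_slope K a b a' b' :
  strictly_increasing K \/ strictly_increasing (fun x => - K x) -> a <> 0 ->
  (forall x, K (x + a) = K x + b) -> (forall x, K (x + a') = K x + b') -> b' = b / a * a'.
Proof.
  intros HK Ha H H'. apply Rminus_diag_uniq, (nat_multiples_bounded _ (Rabs b)). intros n.
  pose proof (monotone_translation_bound K a b HK Ha H (INR n * a')) as Hn.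
  rewrite <- (Rplus_0_l (INR n * a')), INR_IZR_INZ, (translation_iter K a' b'), <- INR_IZR_INZ
    in Hn by auto.
  rewrite Rplus_0_l in Hn.
  replace (INR n * (b' - b / a * a')) with (K 0 + INR n * b' - K 0 - b / a * (INR n * a')) by ring.
  exact Hn.
Qed.

(** * Homeomorphisms conjugating dilations *)

(* [oo] is sent to the junk value [0]. *)
Definition ext_val (y : ext) : R := match y with Some u => u | None => 0 end.

Definition zero_or_infty (x : ext) : Prop := x = Some 0 \/ x = None.

Lemma scale_fixed l x : l <> 1 -> scale l x = x <-> zero_or_infty x.
Proof.
  intros Hl. unfold zero_or_infty. destruct x as [t|]; simpl; split.
  - intros E. injection E as E. left. f_equal. apply (Rmult_eq_reg_l (l - 1)); lra.
  - intros [E|E]; [injection E as ->; rewrite Rmult_0_r; auto|discriminate].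
  - auto.
  - auto.
Qed.

Lemma spow_of_log_abs l m c : l <> 0 -> 0 < l * m ->
  ln (Rabs m) = c * ln (Rabs l) -> m = spow c l.
Proof.
  intros Hl Hlm E. assert (Hm : m <> 0) by (intros ->; lra).
  assert (Habs : Rabs m = Rabs (spow c l)).
  { rewrite Rabs_spow by auto. unfold Rpower. rewrite <- E, exp_ln; auto. apply Rabs_pos_lt; auto. }
  assert (Hsign : 0 < m * spow c l).
  { unfold spow. pose proof (Rpower_gt_0 (Rabs l) (c - 1)).
    replace (m * (l * Rpower (Rabs l) (c - 1))) with ((l * m) * Rpower (Rabs l) (c - 1)) by ring.
    apply Rmult_lt_0_compat; auto. }
  destruct (Rdichotomy _ _ Hm) as [Hn|Hp].
  - rewrite Rabs_left, Rabs_left in Habs by nra. lra.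
  - rewrite Rabs_right, Rabs_right in Habs by nra. lra.
Qed.

Section Scaling_conjugacy.

Variables h hi : ext -> ext.
Hypotheses (h_hi : forall y, h (hi y) = y) (hi_h : forall x, hi (h x) = x).
Hypothesis h_continuous : ext_continuous h.
Hypothesis h_zero_or_infty : forall x, zero_or_infty (h x) <-> zero_or_infty x.

Definition phi (t : R) : R := ext_val (h (Some t)).

Lemma h_Some t : t <> 0 -> h (Some t) = Some (phi t) /\ phi t <> 0.
Proof.
  intros Ht. assert (Hz : ~ zero_or_infty (h (Some t)))
    by (rewrite h_zero_or_infty; intros [E|E]; [injection E|discriminate]; auto).
  unfold phi. destruct (h (Some t)) as [u|]; simpl.
  - split; auto. intros ->. apply Hz. left. auto.
  - exfalso. apply Hz. right. auto.
Qed.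

Lemma phi_inj s t : s <> 0 -> t <> 0 -> phi s = phi t -> s = t.
Proof.
  intros Hs Ht E.
  assert (Some s = Some t) as [=]; auto.
  rewrite <- (hi_h (Some s)), <- (hi_h (Some t)), (proj1 (h_Some s Hs)), (proj1 (h_Some t Ht)), E.
  reflexivity.
Qed.

Lemma phi_surj u : u <> 0 -> exists t, t <> 0 /\ phi t = u.
Proof.
  intros Hu. assert (Hz : ~ zero_or_infty (hi (Some u))).
  { rewrite <- h_zero_or_infty, h_hi. intros [E|E]; [injection E|discriminate]; auto. }
  destruct (hi (Some u)) as [t|] eqn:E.
  - exists t. split; [intros ->; apply Hz; left; auto|].
    unfold phi. rewrite <- E, h_hi. reflexivity.
  - exfalso. apply Hz. right. auto.
Qed.

Lemma phi_continuous t : t <> 0 -> continuity_pt phi t.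
Proof.
  intros Ht e He. destruct (proj1 (ext_continuousP h) h_continuous (Some t) e He) as [d [Hd H]].
  exists d. split; auto. intros s [_ Hs]. specialize (H (Some s) Hs).
  rewrite (proj1 (h_Some t Ht)) in H. change (Rabs (ext_val (h (Some s)) - phi t) < e).
  destruct (h (Some s)); [exact H|contradiction].
Qed.

Lemma phi_scale l m t : (forall x, h (scale l x) = scale m (h x)) -> phi (l * t) = m * phi t.
Proof.
  intros Hlm. unfold phi. change (Some (l * t)) with (scale l (Some t)).
  rewrite Hlm. destruct (h (Some t)); simpl; ring.
Qed.

Lemma phi_same_sign s t : 0 < s * t -> 0 < phi s * phi t.
Proof.
  intros Hst. assert (Hs : s <> 0) by (intros ->; lra).
  set (psi := fun u => phi (s * exp u)).
  assert (Hpsi : continuity psi).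
  { intros u. apply (continuity_pt_comp (fun u => s * exp u) phi).
    - apply continuity_pt_scal, derivable_continuous_pt, derivable_pt_exp.
    - apply phi_continuous, Rmult_integral_contrapositive. split; auto. apply Rgt_not_eq, exp_pos. }
  assert (Hnz : forall u, psi u <> 0)
    by (intros u; apply h_Some, Rmult_integral_contrapositive;
        split; [auto|apply Rgt_not_eq, exp_pos]).
  assert (Hts : 0 < t / s) by (replace (t / s) with (s * t / (s * s)) by (field; auto);
                                apply Rdiv_lt_0_compat; nra).
  replace (phi s) with (psi 0) by (unfold psi; rewrite exp_0, Rmult_1_r; reflexivity).
  replace (phi t) with (psi (ln (t / s)))
    by (unfold psi; rewrite exp_ln by auto; f_equal; field; auto).
  destruct (Rle_dec 0 (ln (t / s))) as [L|L];
    [|rewrite Rmult_comm]; apply continuous_nonvanishing_sign; auto; lra.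
Qed.

Lemma phi_opposite_sign s t : s < 0 < t -> phi s * phi t < 0.
Proof.
  intros [Hs Ht]. destruct (h_Some t ltac:(lra)) as [_ Hphit].
  destruct (phi_surj (- phi t)) as [u [Hu Eu]]; [intro; lra|].
  destruct (Rdichotomy _ _ Hu) as [Hu0|Hu0].
  - pose proof (phi_same_sign s u ltac:(nra)). rewrite Eu in H. lra.
  - pose proof (phi_same_sign u t ltac:(nra)). rewrite Eu in H. nra.
Qed.

Lemma scaling_sign l m : l <> 0 -> (forall x, h (scale l x) = scale m (h x)) -> 0 < l * m.
Proof.
  intros Hl Hlm. pose proof (phi_scale l m 1 Hlm) as E. rewrite Rmult_1_r in E.
  destruct (h_Some 1 ltac:(lra)) as [_ H1].
  assert (0 < phi 1 * phi 1) by (apply Rsqr_pos_lt; auto).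
  destruct (Rdichotomy _ _ Hl) as [Hn|Hp].
  - pose proof (phi_opposite_sign l 1 ltac:(lra)). rewrite E in H0. nra.
  - pose proof (phi_same_sign l 1 ltac:(lra)). rewrite E in H0. nra.
Qed.

Definition log_phi (x : R) : R := ln (Rabs (phi (exp x))).

Lemma log_phi_continuous : continuity log_phi.
Proof.
  intros x. pose proof (exp_pos x) as Hx.
  destruct (h_Some (exp x) ltac:(lra)) as [_ Hnz].
  apply (continuity_pt_comp (fun x => Rabs (phi (exp x))) ln).
  - apply (continuity_pt_comp (fun x => phi (exp x)) Rabs); [|apply Rcontinuity_abs].
    apply (continuity_pt_comp exp phi).
    + apply derivable_continuous_pt, derivable_pt_exp.
    + apply phi_continuous. lra.
  - apply derivable_continuous_pt. exact (exist _ _ (derivable_pt_lim_ln _ (Rabs_pos_lt _ Hnz))).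
Qed.

Lemma log_phi_injective x y : log_phi x = log_phi y -> x = y.
Proof.
  intros E. pose proof (exp_pos x). pose proof (exp_pos y).
  destruct (h_Some (exp x) ltac:(lra)) as [_ Hx]. destruct (h_Some (exp y) ltac:(lra)) as [_ Hy].
  apply ln_inv in E; try (apply Rabs_pos_lt; auto).
  pose proof (phi_same_sign (exp x) (exp y) ltac:(nra)) as S.
  apply exp_inv, phi_inj; try lra.
  destruct (Rcase_abs (phi (exp x))), (Rcase_abs (phi (exp y)));
    [rewrite !Rabs_left in E by lra|rewrite Rabs_left, Rabs_right in E by lra|
     rewrite Rabs_right, Rabs_left in E by lra|rewrite !Rabs_right in E by lra]; nra.
Qed.

(* The dilation by [l * l > 0] preserves the positive half-line, where [log_phi] lives. *)
Lemma log_phi_shift l m : l <> 0 -> (forall x, h (scale l x) = scale m (h x)) ->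
  forall x, log_phi (x + 2 * ln (Rabs l)) = log_phi x + 2 * ln (Rabs m).
Proof.
  intros Hl Hlm x. pose proof (scaling_sign l m Hl Hlm) as Hs.
  assert (Hm : m <> 0) by (intros ->; lra).
  destruct (h_Some (exp x) (Rgt_not_eq _ _ (exp_pos x))) as [_ Hnz].
  assert (E : exp (x + 2 * ln (Rabs l)) = l * (l * exp x)).
  { rewrite exp_plus. replace (2 * ln (Rabs l)) with (ln (Rabs l) + ln (Rabs l)) by ring.
    rewrite exp_plus, exp_ln by (apply Rabs_pos_lt; auto).
    rewrite <- Rabs_mult, Rabs_pos_eq by nra. ring. }
  unfold log_phi. rewrite E, !(phi_scale l m) by auto.
  rewrite !Rabs_mult, !ln_mult by (try apply Rmult_lt_0_compat; apply Rabs_pos_lt; auto). ring.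
Qed.

Lemma log_abs_proportional (I : Type) (l m : I -> R) : (forall r, l r <> 0) ->
  (forall r x, h (scale (l r) x) = scale (m r) (h x)) ->
  exists c, c <> 0 /\ forall r, ln (Rabs (m r)) = c * ln (Rabs (l r)).
Proof.
  intros Hl Hlm.
  assert (Hshift := fun r => log_phi_shift (l r) (m r) (Hl r) (Hlm r)).
  destruct (classic (exists r1, ln (Rabs (l r1)) <> 0)) as [[r1 H1]|Hall].
  - assert (Hmono := continuous_injective_monotone log_phi log_phi_continuous log_phi_injective).
    assert (Hm1 : ln (Rabs (m r1)) <> 0).
    { intros E. pose proof (Hshift r1 0) as S. rewrite E, Rmult_0_r, Rplus_0_r, Rplus_0_l in S.
      apply log_phi_injective in S. apply H1. lra. }
    exists (ln (Rabs (m r1)) / ln (Rabs (l r1))). split.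
    + apply Rmult_integral_contrapositive. split; auto. apply Rinv_neq_0_compat; auto.
    + intros r. assert (Ha : 2 * ln (Rabs (l r1)) <> 0) by (intro E; apply H1; lra).
      pose proof (monotone_translation_slope log_phi _ _ _ _ Hmono Ha (Hshift r1) (Hshift r)) as S.
      apply (Rmult_eq_reg_l 2); [|lra]. rewrite S. field. auto.
  - exists 1. split; [lra|]. intros r.
    assert (Hr : ln (Rabs (l r)) = 0) by (apply NNPP; intro; apply Hall; exists r; auto).
    pose proof (Hshift r 0) as S. rewrite Hr, Rmult_0_r, Rplus_0_r in S. lra.
Qed.

Lemma scaling_exponent (I : Type) (l m : I -> R) : (forall r, l r <> 0) ->
  (forall r x, h (scale (l r) x) = scale (m r) (h x)) ->
  exists c, c <> 0 /\ forall r, m r = spow c (l r).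
Proof.
  intros Hl Hlm. destruct (log_abs_proportional I l m Hl Hlm) as [c [Hc Hr]].
  exists c. split; auto. intros r. apply spow_of_log_abs, Hr; auto. apply scaling_sign; auto.
Qed.

End Scaling_conjugacy.

Lemma conjugacy_zero_or_infty h hi l m : (forall x, hi (h x) = x) ->
  l <> 1 -> (forall x, h (scale l x) = scale m (h x)) ->
  forall x, zero_or_infty (h x) <-> zero_or_infty x.
Proof.
  intros hi_h Hl Hlm.
  assert (Hm : m <> 1).
  { intros ->. apply Hl. assert (E : scale l (Some 1) = Some 1)
      by (rewrite <- (hi_h (scale l _)), Hlm, scale_1, hi_h; reflexivity).
    injection E. lra. }
  intros x. rewrite <- (scale_fixed l x Hl), <- (scale_fixed m (h x) Hm), <- Hlm.
  split; [intros E; rewrite <- (hi_h (scale l x)), E, hi_h; auto|intros ->; auto].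
Qed.

Lemma homeomorphism_scaling_exponent (I : Type) (l m : I -> R) (h : ext -> ext) :
  ext_homeomorphism h -> (forall r, l r <> 0) ->
  (forall r x, h (scale (l r) x) = scale (m r) (h x)) ->
  exists c, c <> 0 /\ forall r, m r = spow c (l r).
Proof.
  intros [hi [hi_h [h_hi [Hh _]]]] Hl Hlm.
  destruct (classic (exists r0, l r0 <> 1)) as [[r0 H0]|Hall].
  - pose proof (conjugacy_zero_or_infty h hi _ _ hi_h H0 (Hlm r0)) as Hzi.
    apply (scaling_exponent h hi h_hi hi_h Hh Hzi I l m Hl Hlm).
  - exists 1. split; [lra|]. intros r.
    assert (Hr : l r = 1) by (apply NNPP; intro; apply Hall; exists r; auto).
    pose proof (Hlm r (hi (Some 1))) as E. rewrite Hr, scale_1, h_hi in E. injection E as E.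
    unfold spow. rewrite Hr, Rabs_R1, Rminus_diag, Rpower_O by lra. lra.
Qed.

Theorem theorem12p1 (I : Type) (S T : mat2) (p1 p2 q1 q2 : I -> R)
  (hS : GL2 S) (hT : GL2 T)
  (hp1 : forall r, p1 r <> 0) (hp2 : forall r, p2 r <> 0)
  (hq1 : forall r, q1 r <> 0) (hq2 : forall r, q2 r <> 0) :
  (exists f : ext -> ext, ext_homeomorphism f /\
     forall (r : I) (x : ext),
       f (act (mmul (mmul S (diag2 (p1 r) (p2 r))) (minv S)) x) =
       act (mmul (mmul T (diag2 (q1 r) (q2 r))) (minv T)) (f x))
  <->
  (exists alpha : R, alpha <> -1 /\
     forall r : I,
       q1 r / q2 r = (p1 r / p2 r) * Rpower (Rabs (p1 r / p2 r)) alpha).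
Proof.
  unfold GL2 in *.
  assert (Hp : forall r, p1 r / p2 r <> 0)
    by (intros r; apply Rmult_integral_contrapositive; split; [|apply Rinv_neq_0_compat]; auto).
  split.
  - intros [f [Hf Hrel]].
    destruct (homeomorphism_scaling_exponent I (fun r => p1 r / p2 r) (fun r => q1 r / q2 r)
                (fun x => act (minv T) (f (act S x)))) as [c [Hc Hr]]; auto.
    + apply ext_homeomorphism_comp; [apply act_homeomorphism, minv_det_neq0; auto|].
      apply ext_homeomorphism_comp; [auto|apply act_homeomorphism; auto].
    + intros r x. cbv beta.
      replace (act S (scale (p1 r / p2 r) x))
        with (act (mmul (mmul S (diag2 (p1 r) (p2 r))) (minv S)) (act S x))
        by (rewrite act_conj_diag2, act_minvK by auto; reflexivity).
      rewrite Hrel, act_conj_diag2, act_minvK by auto. reflexivity.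
    + exists (c - 1). split; [lra|]. apply Hr.
  - intros [alpha [Ha Hr]].
    exists (fun x => act T (ext_power (alpha + 1) (act (minv S) x))). split.
    + apply ext_homeomorphism_comp; [apply act_homeomorphism; auto|].
      apply ext_homeomorphism_comp; [apply ext_power_homeomorphism; lra|].
      apply act_homeomorphism, minv_det_neq0; auto.
    + intros r x. rewrite !act_conj_diag2, !act_minvK, ext_power_scale, Hr by auto.
      unfold spow. replace (alpha + 1 - 1) with alpha by ring. reflexivity.
Qed.
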